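(* Let $x_0,\dots,x_n$ be terminal states with finite scalar objective values satisfying $u(x_i)\le u(x_j)$ for all $0\le i<j\le n$. Define $$I_1:=\{i: u(x_i)<u(x_{i+1}),\ 0\le i\le n-1\},\qquad I_2:=\{i: u(x_i)=u(x_{i+1}),\ 0\le i\le n-1\},$$ and $m:=|I_1|$. Introduce two auxiliary states $x_{-1},x_{n+1}$ with $u(x_{-1})=-\infty$ and $u(x_{n+1})=+\infty$. For $\gamma\ge1$ and $r:\{x_{-1},\dots,x_{n+1}\}\to[1/\gamma,1]$, define $$\mathcal{L}_{\rm OP-N}(r):=\sum_{i=0}^{n+1}\mathcal{L}_{\rm OP}(\{x_{i-1},x_i\};r),$$ and let $\widehat R$ be its minimizer over all such $r$. Let $f_1(\alpha):=\alpha^{m+2}\left(1-\frac{4}{\alpha+3}\right)^{n-m}$. The functions $\alpha\mapsto f_1(\alpha)$ and $\gamma\mapsto \gamma^{-1}f_1(\gamma^{1/(m+1)})$ are increasing on $[1,\infty)$ and tend to $+\infty$; let $\gamma_0\ge 1$ be the unique value with $f_1(\gamma_0^{1/(m+1)})=\gamma_0$, and for $\gamma>\gamma_0$ let $\alpha_\gamma>1$ be the unique solution of $f_1(\alpha_\gamma)=\gamma$, and put $\beta_\gamma:=\frac{\alpha_\gamma-1}{\alpha_\gamma+3}$. Then for every $\gamma>\gamma_0$: $$\widehat R(x_0)=\alpha_\gamma\gamma^{-1},\qquad \widehat R(x_{i+1})=\alpha_\gamma\widehat R(x_i)\ (i\in I_1),\qquad \widehat R(x_{i+1})=\beta_\gamma\widehat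 R(x_i)\ (i\in I_2).$$ Moreover, the minimal value of $\mathcal{L}_{\rm OP-N}$ is strictly decreasing in $\gamma$, so that minimizing $\mathcal{L}_{\rm OP-N}$ with $\gamma$ variable drives $\gamma\to+\infty$, and as $\gamma\to\infty$ one has $\alpha_\gamma\to+\infty$ and $\beta_\gamma\to1$.
   Context: For a pair $X=\{x,x'\}$ of states with objective $u$ and a positive function $r$, the label distribution is $\mathbb{P}_y(x\mid X)=\tfrac12\big(\mathbf{1}[u(x)>u(x')]+\mathbf{1}[u(x)\ge u(x')]\big)$ (symmetrically for $x'$), the model distribution is $\mathbb{P}(x\mid X,r)=r(x)/(r(x)+r(x'))$, and $\mathcal{L}_{\rm OP}(X;r)=\mathrm{KL}(\mathbb{P}_y(\cdot\mid X)\,\|\,\mathbb{P}(\cdot\mid X,r))$. Thus for $u(x)<u(x')$ the loss is $-\log\frac{r(x')}{r(x)+r(x')}$, and for $u(x)=u(x')$ it equals $-\tfrac12\big(\log\frac{r(x)}{r(x)+r(x')}+\log\frac{r(x')}{r(x)+r(x')}\big)-\log 2$. *)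

From Stdlib Require Import Reals Lra List.
From Coquelicot Require Import Rbar.
Open Scope R_scope.

(* Label distribution P_y(x | {x,x'}) with a = u(x), b = u(x') (extended reals). *)
Definition ylab (a b : Rbar) : R :=
  / 2 * ((if Rbar_lt_dec b a then 1 else 0) + (if Rbar_le_dec b a then 1 else 0)).

Definition klterm (p q : R) : R :=
  if Req_EM_T p 0 then 0 else p * ln (p / q).

(* L_OP({x,x'}; r) = KL(P_y(.|X) || P(.|X,r)), with ua = u(x), ub = u(x'),
   ra = r(x), rb = r(x'). *)
Definition L_OP (ua ub : Rbar) (ra rb : R) : R :=
  klterm (ylab ua ub) (ra / (ra + rb)) + klterm (ylab ub ua) (rb / (ra + rb)).

(* States x_{-1}, x_0, ..., x_n, x_{n+1} are encoded by indices k = 0, ..., n+2: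
   index k stands for x_{k-1}.  u_ext gives the (extended) objective. *)
Definition u_ext (n : nat) (u : nat -> R) (k : nat) : Rbar :=
  match k with
  | O => m_infty
  | S j => if Nat.leb j n then Finite (u j) else p_infty
  end.

Definition L_OPN (n : nat) (u : nat -> R) (r : nat -> R) : R :=
  sum_f_R0 (fun i => L_OP (u_ext n u i) (u_ext n u (S i)) (r i) (r (S i))) (S n).

(* r : {x_{-1},...,x_{n+1}} -> [1/gamma, 1]  (values at other indices irrelevant). *)
Definition admissible (n : nat) (gamma : R) (r : nat -> R) : Prop :=
  forall k, (k <= S (S n))%nat -> / gamma <= r k <= 1.

Definition is_minimizer (n : nat) (u : nat -> R) (gamma : R) (r : nat -> R) : Prop :=
  admissible n gamma r /\
  forall r', admissible n gamma r' -> L_OPN n u r <= L_OPN n u r'.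

Definition m_count (n : nat) (u : nat -> R) : nat :=
  length (filter (fun i => if Rlt_dec (u i) (u (S i)) then true else false) (seq 0 n)).

Definition f1 (n m : nat) (alpha : R) : R :=
  alpha ^ (m + 2) * (1 - 4 / (alpha + 3)) ^ (n - m).

Definition g1 (n m : nat) (gamma : R) : R :=
  / gamma * f1 n m (Rpower gamma (/ INR (m + 1))).

Definition beta_of (alpha : R) : R := (alpha - 1) / (alpha + 3).

(* Writing [r(x_k) = rho_k r(x_(k-1))], every pair loss depends on the ratio [rho_k] only:
   it is [ln (1 + 1/rho)] for a strict pair and [ln (1 + rho) - ln 2 - ln rho / 2] for a tie.
   Add [lam ln rho_k] to each of them, with [lam = 1 / (1 + alpha)].  The added terms
   telescope to [lam ln (r(x_(n+1)) / r(x_(-1)))], which is at most [lam ln gamma] on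
   admissible [r], while each tilted pair loss has its unique minimum at [rho = alpha]
   (strict pairs) or [rho = beta_alpha] (ties).  Hence [L_OP-N] is bounded below, with
   equality exactly for the profile starting at [1/gamma] and following these ratios.  Its
   last value is [f1(alpha) / gamma = 1], and it stays inside [[1/gamma, 1]] because
   [alpha^(m+1) < gamma], which is what [gamma > gamma_0] guarantees. *)

From Stdlib Require Import Reals Lra Lia List.
From Coquelicot Require Import Rbar Coquelicot.
Open Scope R_scope.

Lemma ln_lt_sub1 (x : R) : 0 < x -> x <> 1 -> ln x < x - 1.
Proof.
  intros Hx Hx1.
  assert (Hln : ln x <> 0).
  { intros E; apply Hx1; rewrite <- (exp_ln x), E by exact Hx; apply exp_0. }
  pose proof (exp_ineq1 _ Hln) as H; rewrite exp_ln in H by exact Hx; lra.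
Qed.

Lemma ln_le_sub1 (x : R) : 0 < x -> ln x <= x - 1.
Proof.
  intros Hx; destruct (Req_dec x 1) as [->|Hx1].
  - rewrite ln_1; lra.
  - left; now apply ln_lt_sub1.
Qed.

Lemma ln_convex_comb_lt (w x : R) : 0 < w < 1 -> 0 < x -> x <> 1 ->
  w * ln x < ln (w * x + (1 - w)).
Proof.
  intros Hw Hx Hx1; set (y := w * x + (1 - w)).
  assert (Hy : 0 < y) by (unfold y; nra).
  assert (Hxy : x / y <> 1).
  { intros E; apply Hx1.
    assert (x = y) by (rewrite <- (Rmult_1_l y), <- E; field; lra).
    assert (Hprod : (1 - w) * (x - 1) = 0) by (unfold y in *; lra).
    destruct (Rmult_integral _ _ Hprod); lra. }
  assert (Hxy_lt := ln_lt_sub1 (x / y) ltac:(apply Rdiv_lt_0_compat; lra) Hxy).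
  assert (Hy_le := ln_le_sub1 (/ y) ltac:(apply Rinv_0_lt_compat; lra)).
  assert (Hzero : w * (x / y - 1) + (1 - w) * (/ y - 1) = 0) by (unfold y in *; field; lra).
  rewrite ln_div in Hxy_lt by lra; rewrite ln_Rinv in Hy_le by lra.
  assert (w * (ln x - ln y) < w * (x / y - 1)) by (apply Rmult_lt_compat_l; lra).
  assert ((1 - w) * - ln y <= (1 - w) * (/ y - 1)) by (apply Rmult_le_compat_l; lra).
  lra.
Qed.

Lemma ln1p_sub_mul_ln_min (a x : R) : 0 < a -> 0 < x -> x <> a ->
  ln (1 + a) - a / (1 + a) * ln a < ln (1 + x) - a / (1 + a) * ln x.
Proof.
  intros Ha Hx Hxa; set (c := a / (1 + a)).
  assert (Hc : 0 < c < 1).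
  { unfold c; split; [apply Rdiv_lt_0_compat; lra|].
    apply Rmult_lt_reg_r with (1 + a); [lra|]; field_simplify; lra. }
  assert (Ht : 0 < x / a) by (apply Rdiv_lt_0_compat; lra).
  assert (Ht1 : x / a <> 1) by (intros E; apply Hxa; rewrite <- (Rmult_1_l a), <- E; field; lra).
  assert (E : 1 + x = (1 + a) * (c * (x / a) + (1 - c))) by (unfold c; field; lra).
  pose proof (ln_convex_comb_lt c (x / a) Hc Ht Ht1) as H.
  rewrite E, ln_mult by (try apply Rmult_lt_0_compat; nra).
  rewrite ln_div in H by lra.
  lra.
Qed.

Lemma pow_lt_pow_l (a b : R) (p : nat) : 0 <= a < b -> (1 <= p)%nat -> a ^ p < b ^ p.
Proof.
  intros Hab Hp; induction Hp as [|p Hp IH]; simpl; [lra|].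
  pose proof (pow_le a p ltac:(lra)); nra.
Qed.

Lemma pow_antitone (b : R) (i j : nat) : 0 <= b <= 1 -> (i <= j)%nat -> b ^ j <= b ^ i.
Proof.
  intros Hb; induction 1 as [|j _ IH]; [lra|].
  simpl; pose proof (pow_le b j ltac:(lra)); nra.
Qed.

Lemma sum_f_R0_telescope (f : nat -> R) (N : nat) :
  sum_f_R0 (fun k => f (S k) - f k) N = f (S N) - f O.
Proof. induction N as [|N IH]; simpl; [|rewrite IH]; ring. Qed.

Lemma sum_f_R0_lt (f g : nat -> R) (N k0 : nat) :
  (forall k, (k <= N)%nat -> f k <= g k) -> (k0 <= N)%nat -> f k0 < g k0 ->
  sum_f_R0 f N < sum_f_R0 g N.
Proof.
  induction N as [|N IH]; intros Hle Hk0 Hlt; simpl.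
  - now replace k0 with O in Hlt by lia.
  - destruct (Nat.eq_dec k0 (S N)) as [->|Hne].
    + pose proof (sum_Rle f g N ltac:(intros; apply Hle; lia)); lra.
    + pose proof (IH ltac:(intros; apply Hle; lia) ltac:(lia) Hlt).
      pose proof (Hle (S N) (le_n _)); lra.
Qed.

Section IncreasingOn.

Variables (f : R -> R) (c : R).
Hypothesis f_incr : forall a b, c <= a -> a < b -> f a < f b.

Lemma incr_on_reflect_lt (a b : R) : c <= a -> c <= b -> f a < f b -> a < b.
Proof.
  intros Ha Hb Hf; destruct (Rlt_le_dec a b) as [|Hba]; [assumption|exfalso].
  destruct (Req_dec b a) as [->|]; [lra|]; pose proof (f_incr b a Hb ltac:(lra)); lra.
Qed.

Lemma incr_on_inj (a b : R) : c <= a -> c <= b -> f a = f b -> a = b.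
Proof.
  intros Ha Hb Hf; destruct (Rtotal_order a b) as [Hab|[|Hba]]; [exfalso..|assumption|exfalso].
  - pose proof (f_incr a b Ha Hab); lra.
  - pose proof (f_incr b a Hb Hba); lra.
Qed.

End IncreasingOn.

Lemma beta_of_eq (a : R) : a + 3 <> 0 -> beta_of a = 1 - 4 / (a + 3).
Proof. intros Ha; unfold beta_of; field; exact Ha. Qed.

Lemma beta_of_bounds (a : R) : 1 < a -> 0 < beta_of a < 1.
Proof.
  intros Ha; unfold beta_of; split; [apply Rdiv_lt_0_compat; lra|].
  apply Rmult_lt_reg_r with (a + 3); [lra|]; field_simplify; lra.
Qed.

Lemma beta_of_le (a b : R) : 1 <= a -> a <= b -> 0 <= beta_of a <= beta_of b.
Proof.
  intros Ha Hab; unfold beta_of; split; [apply Rdiv_le_0_compat; lra|].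
  apply Rmult_le_reg_r with ((a + 3) * (b + 3)); [nra|]; field_simplify; nra.
Qed.

(** * Pair losses as functions of the ratio *)

Definition pair_cost (strict : bool) (x : R) : R :=
  if strict then ln (1 + / x) else ln (1 + x) - ln 2 - / 2 * ln x.

Definition opt_ratio (strict : bool) (a : R) : R := if strict then a else beta_of a.

Lemma L_OP_lt (ua ub : Rbar) (ra rb : R) : Rbar_lt ua ub -> 0 < ra -> 0 < rb ->
  L_OP ua ub ra rb = pair_cost true (rb / ra).
Proof.
  intros Hab Ha Hb; unfold L_OP, ylab, klterm, pair_cost.
  destruct (Rbar_lt_dec ub ua) as [H|_].
  { exfalso; apply (Rbar_lt_not_le _ _ H), Rbar_lt_le, Hab. }
  destruct (Rbar_le_dec ub ua) as [H|_]; [exfalso; exact (Rbar_lt_not_le _ _ Hab H)|].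
  destruct (Rbar_lt_dec ua ub) as [_|H]; [|contradiction].
  destruct (Rbar_le_dec ua ub) as [_|H]; [|exfalso; apply H, Rbar_lt_le, Hab].
  replace (/ 2 * (0 + 0)) with 0 by ring; replace (/ 2 * (1 + 1)) with 1 by field.
  destruct (Req_EM_T 0 0) as [_|H]; [|contradiction].
  destruct (Req_EM_T 1 0) as [H|_]; [lra|].
  rewrite Rmult_1_l, Rplus_0_l; f_equal; field; lra.
Qed.

Lemma L_OP_eq (a ra rb : R) : 0 < ra -> 0 < rb ->
  L_OP (Finite a) (Finite a) ra rb = pair_cost false (rb / ra).
Proof.
  intros Ha Hb; unfold L_OP, ylab, klterm, pair_cost.
  destruct (Rbar_lt_dec (Finite a) (Finite a)) as [H|_]; [simpl in H; lra|].
  destruct (Rbar_le_dec (Finite a) (Finite a)) as [_|H]; [|exfalso; apply H; simpl; lra].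
  replace (/ 2 * (0 + 1)) with (/ 2) by field.
  destruct (Req_EM_T (/ 2) 0) as [H|_]; [lra|].
  set (x := rb / ra); assert (Hx : 0 < x) by (apply Rdiv_lt_0_compat; lra).
  replace (/ 2 / (ra / (ra + rb))) with ((1 + x) / 2) by (unfold x; field; lra).
  replace (/ 2 / (rb / (ra + rb))) with ((1 + x) / (2 * x)) by (unfold x; field; lra).
  rewrite !ln_div, ln_mult by lra.
  field.
Qed.

Lemma opt_ratio_pos (s : bool) (a : R) : 1 < a -> 0 < opt_ratio s a.
Proof. intros Ha; destruct s; simpl; [lra|apply beta_of_bounds, Ha]. Qed.

Lemma pair_cost_tilted (s : bool) (a x : R) : 1 < a -> 0 < x ->
  pair_cost s x + / (1 + a) * ln x =
  ln (1 + x) - opt_ratio s a / (1 + opt_ratio s a) * ln x - (if s then 0 else ln 2).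
Proof.
  intros Ha Hx; destruct s; simpl.
  - replace (1 + / x) with ((1 + x) / x) by (field; lra).
    rewrite ln_div by lra; field; lra.
  - replace (beta_of a / (1 + beta_of a)) with (/ 2 - / (1 + a)) by (unfold beta_of; field; lra).
    ring.
Qed.

Lemma pair_cost_tangent_lt (s : bool) (a x : R) : 1 < a -> 0 < x -> x <> opt_ratio s a ->
  pair_cost s (opt_ratio s a) + / (1 + a) * ln (opt_ratio s a) <
  pair_cost s x + / (1 + a) * ln x.
Proof.
  intros Ha Hx Hxo; pose proof (opt_ratio_pos s a Ha) as Ho.
  rewrite !pair_cost_tilted by lra.
  pose proof (ln1p_sub_mul_ln_min _ x Ho Hx Hxo); lra.
Qed.

Lemma pair_cost_tangent_le (s : bool) (a x : R) : 1 < a -> 0 < x ->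
  pair_cost s (opt_ratio s a) + / (1 + a) * ln (opt_ratio s a) <=
  pair_cost s x + / (1 + a) * ln x.
Proof.
  intros Ha Hx; destruct (Req_dec x (opt_ratio s a)) as [->|Hxo]; [lra|].
  left; now apply pair_cost_tangent_lt.
Qed.

(* Step [k] joins the states with indices [k] and [S k], i.e. [x_(k-1)] and [x_k];
   the first and the last steps involve [-oo] and [+oo] and are always strict. *)
Definition strict_step (n : nat) (u : nat -> R) (k : nat) : bool :=
  match k with
  | O => true
  | S j => if Nat.ltb j n then (if Rlt_dec (u j) (u (S j)) then true else false) else true
  end.

Lemma strict_step_S (n : nat) (u : nat -> R) (i : nat) : (i < n)%nat ->
  strict_step n u (S i) = if Rlt_dec (u i) (u (S i)) then true else false.
Proof. intros Hi; simpl; now rewrite (proj2 (Nat.ltb_lt i n) Hi). Qed.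

Section Chain.

Variables (n : nat) (u : nat -> R).
Hypothesis hmono : forall i j : nat, (i < j <= n)%nat -> u i <= u j.

Lemma L_OP_step (r : nat -> R) (k : nat) : (k <= S n)%nat -> 0 < r k -> 0 < r (S k) ->
  L_OP (u_ext n u k) (u_ext n u (S k)) (r k) (r (S k)) =
  pair_cost (strict_step n u k) (r (S k) / r k).
Proof.
  intros Hk Hr Hr'; destruct k as [|j].
  { apply L_OP_lt; auto; simpl; now destruct (Nat.leb 0 n). }
  change (u_ext n u (S j)) with (if Nat.leb j n then Finite (u j) else p_infty).
  change (u_ext n u (S (S j))) with (if Nat.leb (S j) n then Finite (u (S j)) else p_infty).
  unfold strict_step; destruct (Nat.ltb j n) eqn:Hjn.
  - apply Nat.ltb_lt in Hjn.
    rewrite (proj2 (Nat.leb_le j n) ltac:(lia)), (proj2 (Nat.leb_le (S j) n) ltac:(lia)).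
    destruct (Rlt_dec (u j) (u (S j))) as [Hlt|Hnlt]; [now apply L_OP_lt|].
    assert (Heq : u j = u (S j)) by (pose proof (hmono j (S j) ltac:(lia)); lra).
    rewrite <- Heq; now apply L_OP_eq.
  - apply Nat.ltb_ge in Hjn; assert (j = n) as -> by lia.
    rewrite Nat.leb_refl, (proj2 (Nat.leb_gt (S n) n) ltac:(lia)).
    now apply L_OP_lt.
Qed.

Lemma L_OPN_ratio_sum (r : nat -> R) : (forall k, (k <= S (S n))%nat -> 0 < r k) ->
  L_OPN n u r = sum_f_R0 (fun k => pair_cost (strict_step n u k) (r (S k) / r k)) (S n).
Proof. intros Hr; apply sum_eq; intros k Hk; apply L_OP_step; auto; apply Hr; lia. Qed.

End Chain.

(** * The optimal profile *)

Lemma m_count_S (N : nat) (u : nat -> R) :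
  m_count (S N) u = (m_count N u + if Rlt_dec (u N) (u (S N)) then 1 else 0)%nat.
Proof.
  unfold m_count; rewrite seq_S, filter_app, length_app; simpl.
  now destruct (Rlt_dec (u N) (u (S N))).
Qed.

Lemma m_count_le (N : nat) (u : nat -> R) : (m_count N u <= N)%nat.
Proof.
  induction N as [|N IH]; [unfold m_count; simpl; lia|].
  rewrite m_count_S; destruct (Rlt_dec _ _); lia.
Qed.

Lemma m_count_mono (N N' : nat) (u : nat -> R) : (N <= N')%nat ->
  (m_count N u <= m_count N' u /\ N - m_count N u <= N' - m_count N' u)%nat.
Proof.
  induction 1 as [|N' _ IH]; [lia|].
  rewrite m_count_S; pose proof (m_count_le N' u); destruct (Rlt_dec _ _); lia.
Qed.

Fixpoint opt_profile (n : nat) (u : nat -> R) (a : R) (k : nat) : R :=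
  match k with
  | O => 1
  | S j => opt_profile n u a j * opt_ratio (strict_step n u j) a
  end.

Lemma opt_profile_closed (n : nat) (u : nat -> R) (a : R) (N : nat) : (N <= n)%nat ->
  opt_profile n u a (S N) = a ^ S (m_count N u) * beta_of a ^ (N - m_count N u).
Proof.
  induction N as [|N IH]; intros HN; [simpl; ring|].
  change (opt_profile n u a (S (S N)))
    with (opt_profile n u a (S N) * opt_ratio (strict_step n u (S N)) a).
  rewrite IH by lia; unfold strict_step; rewrite (proj2 (Nat.ltb_lt N n) HN), m_count_S.
  pose proof (m_count_le N u).
  unfold opt_ratio; destruct (Rlt_dec (u N) (u (S N))); cbv iota beta.
  - replace (m_count N u + 1)%nat with (S (m_count N u)) by lia.
    replace (S N - S (m_count N u))%nat with (N - m_count N u)%nat by lia.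
    simpl; ring.
  - replace (S N - (m_count N u + 0))%nat with (S (N - m_count N u)) by lia.
    rewrite Nat.add_0_r; simpl; ring.
Qed.

Lemma opt_profile_last (n : nat) (u : nat -> R) (a : R) : 1 < a ->
  opt_profile n u a (S (S n)) = f1 n (m_count n u) a.
Proof.
  intros Ha.
  change (opt_profile n u a (S (S n)))
    with (opt_profile n u a (S n) * opt_ratio (strict_step n u (S n)) a).
  rewrite opt_profile_closed by lia; unfold strict_step; rewrite Nat.ltb_irrefl.
  unfold f1; rewrite <- beta_of_eq by lra.
  replace (m_count n u + 2)%nat with (S (S (m_count n u))) by lia.
  simpl; ring.
Qed.

Lemma opt_profile_bounds (n : nat) (u : nat -> R) (a : R) (k : nat) : 1 < a ->
  a ^ S (m_count n u) < f1 n (m_count n u) a -> (k <= S (S n))%nat ->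
  1 <= opt_profile n u a k <= f1 n (m_count n u) a.
Proof.
  intros Ha Hlt Hk; set (m := m_count n u) in *; set (b := beta_of a).
  pose proof (beta_of_bounds a Ha) as Hb; fold b in Hb.
  assert (Hf1 : f1 n m a = a ^ S m * (a * b ^ (n - m))).
  { unfold f1, b; rewrite beta_of_eq by lra.
    replace (m + 2)%nat with (S (S m)) by lia; simpl; ring. }
  assert (Ham : 1 <= a ^ S m) by (apply pow_R1_Rle; lra).
  assert (Htail : 1 < a * b ^ (n - m)).
  { apply Rnot_le_lt; intros Hle; rewrite Hf1 in Hlt.
    pose proof (Rmult_le_compat_l (a ^ S m) _ _ ltac:(lra) Hle); lra. }
  destruct k as [|N]; [simpl; lra|].
  destruct (Nat.eq_dec N (S n)) as [->|HN].
  { rewrite opt_profile_last by exact Ha; fold m; lra. }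
  rewrite opt_profile_closed by lia; fold b; set (c := m_count N u).
  destruct (m_count_mono N n u ltac:(lia)) as [Hc Hd]; fold c m in Hc, Hd.
  assert (Hac : a <= a ^ S c) by (rewrite <- (pow_1 a) at 1; apply Rle_pow; lia || lra).
  assert (HacS : a ^ S c <= a ^ S m) by (apply Rle_pow; lia || lra).
  assert (Hbd : b ^ (n - m) <= b ^ (N - c)) by (apply pow_antitone; lra || lia).
  assert (Hb1 : b ^ (N - c) <= 1) by (rewrite <- (pow_O b); apply pow_antitone; lra || lia).
  assert (Hbm : 0 <= b ^ (n - m)) by (apply pow_le; lra).
  split.
  - pose proof (Rmult_le_compat a _ _ _ ltac:(lra) Hbm Hac Hbd); lra.
  - pose proof (Rmult_le_compat_l (a ^ S c) _ _ ltac:(apply pow_le; lra) Hb1); lra.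
Qed.

(** * Minimising [L_OPN] *)

Lemma admissible_pos (n : nat) (gamma : R) (r : nat -> R) (k : nat) : 0 < gamma ->
  admissible n gamma r -> (k <= S (S n))%nat -> 0 < r k.
Proof.
  intros Hg Hr Hk; pose proof (Rinv_0_lt_compat _ Hg); pose proof (Hr k Hk); lra.
Qed.

Lemma admissible_weaken (n : nat) (gamma gamma' : R) (r : nat -> R) : 0 < gamma ->
  gamma <= gamma' -> admissible n gamma r -> admissible n gamma' r.
Proof.
  intros Hg Hgg Hr k Hk; pose proof (Hr k Hk).
  pose proof (Rinv_le_contravar _ _ Hg Hgg); lra.
Qed.

Definition opt_r (n : nat) (u : nat -> R) (a : R) (k : nat) : R :=
  opt_profile n u a k / f1 n (m_count n u) a.

Section Minimizer.

Variables (n : nat) (u : nat -> R) (a : R).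
Hypothesis hmono : forall i j : nat, (i < j <= n)%nat -> u i <= u j.
Hypothesis a_gt1 : 1 < a.
Hypothesis a_pow_lt : a ^ S (m_count n u) < f1 n (m_count n u) a.

Let gamma := f1 n (m_count n u) a.
Let lam := / (1 + a).
Let tilted (k : nat) (x : R) := pair_cost (strict_step n u k) x + lam * ln x.

Lemma gamma_ge1 : 1 <= gamma.
Proof. pose proof (opt_profile_bounds n u a O a_gt1 a_pow_lt ltac:(lia)); unfold gamma; lra. Qed.

Lemma opt_r_admissible : admissible n gamma (opt_r n u a).
Proof.
  intros k Hk; pose proof (opt_profile_bounds n u a k a_gt1 a_pow_lt Hk) as Hb.
  fold gamma in Hb; pose proof gamma_ge1; unfold opt_r; fold gamma; split.
  - apply Rmult_le_reg_r with gamma; [lra|]; field_simplify; lra.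
  - apply Rmult_le_reg_r with gamma; [lra|]; field_simplify; lra.
Qed.

Lemma opt_r_ratio (k : nat) : (k <= S n)%nat ->
  opt_r n u a (S k) / opt_r n u a k = opt_ratio (strict_step n u k) a.
Proof.
  intros Hk; pose proof (opt_profile_bounds n u a k a_gt1 a_pow_lt ltac:(lia)).
  pose proof gamma_ge1; unfold opt_r; simpl; fold gamma; field; lra.
Qed.

Lemma L_OPN_tilted (r : nat -> R) : (forall k, (k <= S (S n))%nat -> 0 < r k) ->
  L_OPN n u r =
  sum_f_R0 (fun k => tilted k (r (S k) / r k)) (S n) - lam * (ln (r (S (S n))) - ln (r O)).
Proof.
  intros Hr; rewrite (L_OPN_ratio_sum n u hmono r Hr); unfold tilted.
  rewrite (sum_plus (fun k => pair_cost (strict_step n u k) (r (S k) / r k))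
                    (fun k => lam * ln (r (S k) / r k))).
  enough (sum_f_R0 (fun k => lam * ln (r (S k) / r k)) (S n) =
          lam * ln (r (S (S n))) - lam * ln (r O)) by lra.
  rewrite <- (sum_f_R0_telescope (fun k => lam * ln (r k))).
  apply sum_eq; intros k Hk; rewrite ln_div by (apply Hr; lia); ring.
Qed.

Lemma L_OPN_sub_opt_r (r : nat -> R) : admissible n gamma r ->
  L_OPN n u r - L_OPN n u (opt_r n u a) =
  (sum_f_R0 (fun k => tilted k (r (S k) / r k)) (S n) -
   sum_f_R0 (fun k => tilted k (opt_ratio (strict_step n u k) a)) (S n)) +
  lam * (ln (r O) - ln (/ gamma)) + lam * (ln 1 - ln (r (S (S n)))).
Proof.
  intros Hr; pose proof gamma_ge1.
  rewrite (L_OPN_tilted r) by (intros; eapply admissible_pos; eauto; lra).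
  rewrite (L_OPN_tilted (opt_r n u a))
    by (intros; eapply admissible_pos; [|apply opt_r_admissible|]; eauto; lra).
  rewrite (sum_eq (fun k => tilted k (opt_r n u a (S k) / opt_r n u a k))
                  (fun k => tilted k (opt_ratio (strict_step n u k) a)))
    by (intros k Hk; now rewrite opt_r_ratio).
  replace (opt_r n u a (S (S n))) with 1
    by (unfold opt_r; rewrite opt_profile_last by exact a_gt1; field; fold gamma; lra).
  replace (opt_r n u a O) with (/ gamma) by (unfold opt_r; simpl; fold gamma; field; lra).
  ring.
Qed.

Lemma opt_r_gap_nonneg (r : nat -> R) : admissible n gamma r ->
  sum_f_R0 (fun k => tilted k (opt_ratio (strict_step n u k) a)) (S n) <=
  sum_f_R0 (fun k => tilted k (r (S k) / r k)) (S n) /\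
  0 <= lam * (ln (r O) - ln (/ gamma)) /\ 0 <= lam * (ln 1 - ln (r (S (S n)))).
Proof.
  intros Hr; pose proof gamma_ge1.
  assert (Hpos : forall k, (k <= S (S n))%nat -> 0 < r k)
    by (intros; eapply admissible_pos; eauto; lra).
  assert (Hlam : 0 <= lam) by (left; apply Rinv_0_lt_compat; lra).
  split; [|split].
  - apply sum_Rle; intros k Hk; apply pair_cost_tangent_le; [exact a_gt1|].
    apply Rdiv_lt_0_compat; apply Hpos; lia.
  - apply Rmult_le_pos; [exact Hlam|].
    enough (ln (/ gamma) <= ln (r O)) by lra.
    apply ln_le; [apply Rinv_0_lt_compat; lra|apply (Hr O); lia].
  - apply Rmult_le_pos; [exact Hlam|].
    enough (ln (r (S (S n))) <= ln 1) by lra.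
    apply ln_le; [apply Hpos|apply Hr]; lia.
Qed.

Lemma L_OPN_opt_r_le (r : nat -> R) : admissible n gamma r ->
  L_OPN n u (opt_r n u a) <= L_OPN n u r.
Proof. intros Hr; pose proof (L_OPN_sub_opt_r r Hr); pose proof (opt_r_gap_nonneg r Hr); lra. Qed.

Lemma L_OPN_opt_r_eq (r : nat -> R) : admissible n gamma r ->
  L_OPN n u r <= L_OPN n u (opt_r n u a) ->
  r O = / gamma /\
  forall k, (k <= S n)%nat -> r (S k) = opt_ratio (strict_step n u k) a * r k.
Proof.
  intros Hr Hle; pose proof gamma_ge1.
  pose proof (L_OPN_sub_opt_r r Hr) as Hsplit.
  destruct (opt_r_gap_nonneg r Hr) as [Hsum [Hleft Hright]].
  assert (Hpos : forall k, (k <= S (S n))%nat -> 0 < r k)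
    by (intros; eapply admissible_pos; eauto; lra).
  assert (Hlam : 0 < lam) by (apply Rinv_0_lt_compat; lra).
  split.
  - destruct (Rle_lt_or_eq_dec _ _ (proj1 (Hr O ltac:(lia)))) as [Hlt|]; [exfalso|easy].
    assert (Hln : ln (/ gamma) < ln (r O))
      by (apply ln_increasing; [apply Rinv_0_lt_compat|]; lra).
    pose proof (Rmult_lt_compat_l lam _ _ Hlam (proj2 (Rlt_0_minus _ _) Hln)); lra.
  - intros k Hk; pose proof (Hpos k ltac:(lia)).
    destruct (Req_dec (r (S k) / r k) (opt_ratio (strict_step n u k) a)) as [E|Hne].
    { rewrite <- E; field; lra. }
    exfalso.
    assert (sum_f_R0 (fun k => tilted k (opt_ratio (strict_step n u k) a)) (S n) <
            sum_f_R0 (fun k => tilted k (r (S k) / r k)) (S n)); [|lra].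
    apply sum_f_R0_lt with k; [|exact Hk|].
    + intros j Hj; apply pair_cost_tangent_le; [exact a_gt1|].
      apply Rdiv_lt_0_compat; apply Hpos; lia.
    + apply pair_cost_tangent_lt; [exact a_gt1| |exact Hne].
      apply Rdiv_lt_0_compat; apply Hpos; lia.
Qed.

Lemma opt_r_is_minimizer : is_minimizer n u gamma (opt_r n u a).
Proof. split; [exact opt_r_admissible|exact L_OPN_opt_r_le]. Qed.

Lemma is_minimizer_ratios (r : nat -> R) : is_minimizer n u gamma r ->
  r O = / gamma /\
  forall k, (k <= S n)%nat -> r (S k) = opt_ratio (strict_step n u k) a * r k.
Proof. intros [Hr Hmin]; apply (L_OPN_opt_r_eq r Hr), Hmin, opt_r_admissible. Qed.

End Minimizer.

(** * The functions f1 and g1 *)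

(* [f1 n m] is [f1_gen (m + 2) (n - m)] by definition, and [g1 n m] becomes
   [f1_gen 1 (n - m)] after the substitution [gamma = t ^ (m + 1)]. *)
Definition f1_gen (p k : nat) (t : R) : R := t ^ p * (1 - 4 / (t + 3)) ^ k.

Lemma f1_gen_lt (p k : nat) (a b : R) : (1 <= p)%nat -> 1 <= a -> a < b ->
  f1_gen p k a < f1_gen p k b.
Proof.
  intros Hp Ha Hab; unfold f1_gen; rewrite <- !beta_of_eq by lra.
  pose proof (pow_lt_pow_l a b p ltac:(lra) Hp).
  pose proof (beta_of_bounds b ltac:(lra)); pose proof (beta_of_le a b Ha ltac:(lra)).
  pose proof (pow_incr (beta_of a) (beta_of b) k ltac:(lra)).
  pose proof (pow_lt (beta_of b) k ltac:(lra)).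
  pose proof (pow_le a p ltac:(lra)); pose proof (pow_le (beta_of a) k ltac:(lra)).
  nra.
Qed.

Lemma f1_gen_1_le (p k : nat) : f1_gen p k 1 <= 1.
Proof.
  unfold f1_gen; rewrite pow1; replace (1 - 4 / (1 + 3)) with 0 by field.
  destruct k; simpl; lra.
Qed.

Lemma f1_gen_ge_linear (p k : nat) (t : R) : (1 <= p)%nat -> 5 <= t ->
  t / 2 ^ k <= f1_gen p k t.
Proof.
  intros Hp Ht; unfold f1_gen, Rdiv; rewrite <- pow_inv.
  apply Rmult_le_compat; [lra|left; apply pow_lt; lra| |].
  - rewrite <- (pow_1 t) at 1; apply Rle_pow; lra || lia.
  - apply pow_incr; split; [lra|].
    enough (4 / (t + 3) <= / 2) by lra.
    apply Rmult_le_reg_r with (2 * (t + 3)); [lra|]; field_simplify; lra.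
Qed.

Lemma f1_gen_unbounded (p k : nat) (M : R) : (1 <= p)%nat ->
  exists A, 1 <= A /\ forall t, A <= t -> M < f1_gen p k t.
Proof.
  intros Hp; exists (Rmax 5 (M * 2 ^ k + 1)); split.
  { pose proof (Rmax_l 5 (M * 2 ^ k + 1)); lra. }
  intros t Ht; pose proof (Rmax_l 5 (M * 2 ^ k + 1)); pose proof (Rmax_r 5 (M * 2 ^ k + 1)).
  pose proof (pow_lt 2 k ltac:(lra)).
  enough (M < t / 2 ^ k) by (pose proof (f1_gen_ge_linear p k t Hp ltac:(lra)); lra).
  apply Rmult_lt_reg_r with (2 ^ k); [lra|]; field_simplify; lra.
Qed.

Lemma f1_gen_continuous (p k : nat) (t : R) : 1 <= t -> continuity_pt (f1_gen p k) t.
Proof.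
  intros Ht; apply continuity_pt_filterlim.
  assert (Hd : ex_derive (f1_gen p k) t) by (unfold f1_gen; auto_derive; lra).
  exact (ex_derive_continuous _ _ Hd).
Qed.

Lemma f1_gen_onto (p k : nat) (y : R) : (1 <= p)%nat -> 1 <= y ->
  exists t, 1 <= t /\ f1_gen p k t = y.
Proof.
  intros Hp Hy; destruct (f1_gen_unbounded p k y Hp) as [A [HA HAy]].
  pose proof (f1_gen_1_le p k); pose proof (HAy (A + 1) ltac:(lra)).
  destruct (Req_dec (f1_gen p k 1) y) as [E|Hne]; [exists 1; split; lra|].
  destruct (Ranalysis5.IVT_interv (fun t => f1_gen p k t - y) 1 (A + 1)) as [t [Ht Et]];
    [| lra | lra | lra | exists t; split; lra].
  intros t Ht; apply continuity_pt_minus; [apply f1_gen_continuous; lra|].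
  apply continuity_pt_const; intros ? ?; reflexivity.
Qed.

Lemma INR_add1_pos (m : nat) : 0 < INR (m + 1).
Proof. apply lt_0_INR; lia. Qed.

Lemma Rpower_pow_root (m : nat) (x : R) : 0 < x -> Rpower (x ^ (m + 1)) (/ INR (m + 1)) = x.
Proof.
  intros Hx; rewrite <- Rpower_pow, Rpower_mult, Rinv_r by (pose proof (INR_add1_pos m); lra).
  now apply Rpower_1.
Qed.

Lemma pow_Rpower_root (m : nat) (x : R) : 0 < x -> Rpower x (/ INR (m + 1)) ^ (m + 1) = x.
Proof.
  intros Hx; rewrite <- Rpower_pow by apply exp_pos.
  rewrite Rpower_mult, Rinv_l by (pose proof (INR_add1_pos m); lra).
  now apply Rpower_1.
Qed.

Lemma Rpower_root_ge1 (m : nat) (x : R) : 1 <= x -> 1 <= Rpower x (/ INR (m + 1)).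
Proof.
  intros Hx; rewrite <- (Rpower_pow_root m 1), pow1 by lra.
  apply Rle_Rpower_l; [left; apply Rinv_0_lt_compat, INR_add1_pos|lra].
Qed.

Lemma Rpower_root_lt (m : nat) (a b : R) : 0 < a -> a < b ->
  Rpower a (/ INR (m + 1)) < Rpower b (/ INR (m + 1)).
Proof. intros Ha Hab; apply Rlt_Rpower_l; [apply Rinv_0_lt_compat, INR_add1_pos|lra]. Qed.

Lemma f1_lt (n m : nat) (a b : R) : 1 <= a -> a < b -> f1 n m a < f1 n m b.
Proof. apply (f1_gen_lt (m + 2) (n - m)); lia. Qed.

Lemma f1_split (n m : nat) (t : R) : f1 n m t = t ^ (m + 1) * f1_gen 1 (n - m) t.
Proof.
  unfold f1, f1_gen; replace (m + 2)%nat with (S (m + 1)) by lia; simpl; ring.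
Qed.

Lemma g1_root (n m : nat) (x : R) : 0 < x ->
  g1 n m x = f1_gen 1 (n - m) (Rpower x (/ INR (m + 1))).
Proof. intros Hx; unfold g1; rewrite f1_split, pow_Rpower_root by exact Hx; field; lra. Qed.

Lemma g1_lt (n m : nat) (a b : R) : 1 <= a -> a < b -> g1 n m a < g1 n m b.
Proof.
  intros Ha Hab; rewrite !g1_root by lra.
  apply f1_gen_lt; [lia|apply Rpower_root_ge1, Ha|apply Rpower_root_lt; lra].
Qed.

Lemma g1_unbounded (n m : nat) (M : R) :
  exists A, 1 <= A /\ forall x, A <= x -> M < g1 n m x.
Proof.
  destruct (f1_gen_unbounded 1 (n - m) M ltac:(lia)) as [T [HT HTM]].
  exists (T ^ (m + 1)); pose proof (pow_R1_Rle T (m + 1) HT); split; [lra|].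
  intros x Hx; rewrite g1_root by lra; apply HTM.
  rewrite <- (Rpower_pow_root m T) at 1 by lra.
  apply Rle_Rpower_l; [left; apply Rinv_0_lt_compat, INR_add1_pos|lra].
Qed.

Lemma f1_root_fixed_iff (n m : nat) (x : R) : 0 < x ->
  f1 n m (Rpower x (/ INR (m + 1))) = x <-> g1 n m x = 1.
Proof.
  intros Hx; unfold g1; split; intros E.
  - rewrite E; field; lra.
  - apply Rmult_eq_reg_l with (/ x); [rewrite E; field|apply Rinv_neq_0_compat]; lra.
Qed.

Lemma gamma0_exists_unique (n m : nat) :
  exists g0, (1 <= g0 /\ f1 n m (Rpower g0 (/ INR (m + 1))) = g0) /\
    forall g0', 1 <= g0' -> f1 n m (Rpower g0' (/ INR (m + 1))) = g0' -> g0' = g0.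
Proof.
  destruct (f1_gen_onto 1 (n - m) 1 ltac:(lia) ltac:(lra)) as [t [Ht Et]].
  pose proof (pow_R1_Rle t (m + 1) Ht) as Hg0.
  assert (Hfix : g1 n m (t ^ (m + 1)) = 1) by (rewrite g1_root, Rpower_pow_root; lra).
  exists (t ^ (m + 1)); split; [split; [lra|apply f1_root_fixed_iff; lra]|].
  intros g0' Hg0' E'; apply f1_root_fixed_iff in E'; [|lra].
  apply (incr_on_inj (g1 n m) 1); [apply g1_lt|lra|lra|congruence].
Qed.

Lemma f1_root_exists_unique (n m : nat) (gamma : R) : 1 < gamma ->
  exists alpha, (1 < alpha /\ f1 n m alpha = gamma) /\
    forall alpha', 1 < alpha' -> f1 n m alpha' = gamma -> alpha' = alpha.
Proof.
  intros Hg; destruct (f1_gen_onto (m + 2) (n - m) gamma ltac:(lia) ltac:(lra)) as [t [Ht Et]].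
  assert (Ht1 : t <> 1) by (intros ->; pose proof (f1_gen_1_le (m + 2) (n - m)); lra).
  change (f1 n m t = gamma) in Et.
  exists t; split; [split; [lra|exact Et]|].
  intros a' Ha' E'; apply (incr_on_inj (f1 n m) 1); [apply f1_lt|lra|lra|congruence].
Qed.

Lemma f1_root_pow_lt (n m : nat) (g0 gamma alpha : R) :
  1 <= g0 -> f1 n m (Rpower g0 (/ INR (m + 1))) = g0 -> g0 < gamma ->
  1 < alpha -> f1 n m alpha = gamma -> alpha ^ S m < gamma.
Proof.
  intros Hg0 E0 Hg Ha Ea.
  apply f1_root_fixed_iff in E0; [|lra].
  pose proof (g1_lt n m g0 gamma Hg0 Hg) as Hg1; rewrite E0 in Hg1.
  set (t := Rpower gamma (/ INR (m + 1))).
  assert (Ht : 1 <= t) by (apply Rpower_root_ge1; lra).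
  assert (Hft : f1 n m alpha < f1 n m t).
  { rewrite Ea; unfold g1 in Hg1; fold t in Hg1.
    apply Rmult_lt_reg_l with (/ gamma); [apply Rinv_0_lt_compat; lra|].
    rewrite Rinv_l by lra; exact Hg1. }
  pose proof (incr_on_reflect_lt (f1 n m) 1 (f1_lt n m) alpha t ltac:(lra) Ht Hft).
  rewrite <- (pow_Rpower_root m gamma) by lra; fold t.
  replace (S m) with (m + 1)%nat by lia; apply pow_lt_pow_l; lra || lia.
Qed.

Lemma f1_root_unbounded (n m : nat) (M : R) : exists G, forall gamma alpha,
  G < gamma -> 1 < alpha -> f1 n m alpha = gamma -> M < alpha.
Proof.
  exists (f1 n m (Rmax M 1)); intros gamma alpha HG Ha Ea.
  pose proof (Rmax_l M 1); pose proof (Rmax_r M 1).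
  enough (Rmax M 1 < alpha) by lra.
  apply (incr_on_reflect_lt (f1 n m) 1 (f1_lt n m)); lra.
Qed.

Lemma beta_of_near1 (eps : R) : 0 < eps ->
  exists A, forall alpha, A < alpha -> Rabs (beta_of alpha - 1) < eps.
Proof.
  intros He; exists (Rmax 1 (4 / eps)); intros alpha Ha.
  pose proof (Rmax_l 1 (4 / eps)); pose proof (Rmax_r 1 (4 / eps)).
  replace (beta_of alpha - 1) with (- (4 / (alpha + 3))) by (unfold beta_of; field; lra).
  rewrite Rabs_Ropp, Rabs_pos_eq by (left; apply Rdiv_lt_0_compat; lra).
  assert (H4 : 4 < eps * alpha).
  { apply Rmult_lt_reg_l with (/ eps); [apply Rinv_0_lt_compat; lra|].
    rewrite <- Rmult_assoc, Rinv_l by lra; unfold Rdiv in *; lra. }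
  apply Rmult_lt_reg_r with (alpha + 3); [lra|]; field_simplify; nra.
Qed.

Section BeyondGamma0.

Variables (n : nat) (u : nat -> R) (g0 : R).
Hypothesis hmono : forall i j : nat, (i < j <= n)%nat -> u i <= u j.
Hypothesis g0_ge1 : 1 <= g0.
Hypothesis g0_fixed : f1 n (m_count n u) (Rpower g0 (/ INR (m_count n u + 1))) = g0.

Lemma minimizer_beyond_gamma0 (gamma alpha : R) :
  g0 < gamma -> 1 < alpha -> f1 n (m_count n u) alpha = gamma ->
  (exists r, is_minimizer n u gamma r) /\
  forall r, is_minimizer n u gamma r ->
    r O = / gamma /\
    forall k, (k <= S n)%nat -> r (S k) = opt_ratio (strict_step n u k) alpha * r k.
Proof.
  intros Hg Ha Ea; subst gamma.
  pose proof (f1_root_pow_lt n _ g0 _ alpha g0_ge1 g0_fixed Hg Ha eq_refl) as Hpow.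
  split; [eexists; exact (opt_r_is_minimizer n u alpha hmono Ha Hpow)|].
  exact (is_minimizer_ratios n u alpha hmono Ha Hpow).
Qed.

(* A minimiser at [gamma] stays admissible at [gamma'] and would minimise there too,
   but it starts at [1/gamma] instead of the forced value [1/gamma']. *)
Lemma min_L_OPN_decreasing (gamma gamma' : R) (r r' : nat -> R) :
  g0 < gamma -> gamma < gamma' ->
  is_minimizer n u gamma r -> is_minimizer n u gamma' r' -> L_OPN n u r' < L_OPN n u r.
Proof.
  intros Hg Hgg [Hr Hmin] [Hr' Hmin'].
  destruct (f1_root_exists_unique n (m_count n u) gamma' ltac:(lra)) as [a' [[Ha' Ea'] _]].
  apply Rnot_le_lt; intros Hle.
  assert (Hr_at_gamma' : is_minimizer n u gamma' r).
  { split; [apply (admissible_weaken n gamma); lra || exact Hr|].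
    intros r'' Hr''; specialize (Hmin' r'' Hr''); lra. }
  destruct (proj2 (minimizer_beyond_gamma0 gamma' a' ltac:(lra) Ha' Ea') r Hr_at_gamma')
    as [Hr0 _].
  pose proof (Hr O ltac:(lia)); pose proof (Rinv_lt_contravar gamma gamma' ltac:(nra) Hgg).
  lra.
Qed.

End BeyondGamma0.

Theorem proposition5 (n : nat) (u : nat -> R)
  (hmono : forall i j : nat, (i < j <= n)%nat -> u i <= u j) :
  let m := m_count n u in
  (* f1 and gamma |-> gamma^{-1} f1(gamma^{1/(m+1)}) are increasing on [1,oo) and tend to +oo *)
  (forall a b, 1 <= a -> a < b -> f1 n m a < f1 n m b) /\
  (forall M, exists A, forall a, A <= a -> M < f1 n m a) /\
  (forall a b, 1 <= a -> a < b -> g1 n m a < g1 n m b) /\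
  (forall M, exists A, 1 <= A /\ forall a, A <= a -> M < g1 n m a) /\
  (* gamma_0 >= 1 with f1(gamma_0^{1/(m+1)}) = gamma_0 exists and is unique *)
  (exists g0, (1 <= g0 /\ f1 n m (Rpower g0 (/ INR (m + 1))) = g0) /\
     forall g0', 1 <= g0' -> f1 n m (Rpower g0' (/ INR (m + 1))) = g0' -> g0' = g0) /\
  (forall g0, 1 <= g0 -> f1 n m (Rpower g0 (/ INR (m + 1))) = g0 ->
    (* alpha_gamma > 1 with f1(alpha_gamma) = gamma exists and is unique *)
    (forall gamma, g0 < gamma ->
       exists alpha, (1 < alpha /\ f1 n m alpha = gamma) /\
         forall alpha', 1 < alpha' -> f1 n m alpha' = gamma -> alpha' = alpha) /\
    (* the minimizer exists and has the stated form *)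
    (forall gamma alpha, g0 < gamma -> 1 < alpha -> f1 n m alpha = gamma ->
       (exists r, is_minimizer n u gamma r) /\
       forall r, is_minimizer n u gamma r ->
         r 1%nat = alpha / gamma /\
         (forall i, (i < n)%nat -> u i < u (S i) -> r (S (S i)) = alpha * r (S i)) /\
         (forall i, (i < n)%nat -> u i = u (S i) -> r (S (S i)) = beta_of alpha * r (S i))) /\
    (* the minimal value of L_{OP-N} is strictly decreasing in gamma *)
    (forall gamma gamma' r r', g0 < gamma -> gamma < gamma' ->
       is_minimizer n u gamma r -> is_minimizer n u gamma' r' ->
       L_OPN n u r' < L_OPN n u r) /\
    (* alpha_gamma -> +oo and beta_gamma -> 1 as gamma -> +oo *)
    (forall M, exists G, forall gamma alpha, G < gamma -> 1 < alpha ->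
       f1 n m alpha = gamma -> M < alpha) /\
    (forall eps, 0 < eps -> exists G, forall gamma alpha, G < gamma -> 1 < alpha ->
       f1 n m alpha = gamma -> Rabs (beta_of alpha - 1) < eps)).
Proof.
  intros m.
  split; [apply f1_lt|].
  split.
  { intros M; destruct (f1_gen_unbounded (m + 2) (n - m) M ltac:(lia)) as [A [_ HA]].
    now exists A. }
  split; [apply g1_lt|].
  split; [apply g1_unbounded|].
  split; [apply gamma0_exists_unique|].
  intros g0 Hg0 E0.
  split; [intros gamma Hg; apply f1_root_exists_unique; lra|].
  split.
  { intros gamma alpha Hg Ha Ea.
    destruct (minimizer_beyond_gamma0 n u g0 hmono Hg0 E0 gamma alpha Hg Ha Ea)
      as [Hex Hshape].
    split; [exact Hex|]; intros r Hr; destruct (Hshape r Hr) as [H0 Hk].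
    split; [|split].
    - rewrite (Hk O), H0 by lia; simpl; unfold Rdiv; ring.
    - intros i Hi Hu; rewrite (Hk (S i)), strict_step_S by lia.
      now destruct (Rlt_dec (u i) (u (S i))).
    - intros i Hi Hu; rewrite (Hk (S i)), strict_step_S by lia.
      destruct (Rlt_dec (u i) (u (S i))); [lra|reflexivity]. }
  split; [intros; eapply min_L_OPN_decreasing; eauto|].
  split; [apply f1_root_unbounded|].
  intros eps He; destruct (beta_of_near1 eps He) as [A HA].
  destruct (f1_root_unbounded n m A) as [G HG]; exists G.
  intros gamma alpha Hg Ha Ea; apply HA, (HG gamma); assumption.
Qed.
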